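(* Let $(X,* )$ be an infinite compact metrizable group with identity $e$, and let $f\colon X\to X$ be a continuous group homomorphism which is transitive and satisfies $\overline{\mathcal M(f)}=X$. Let $S\subset X$ be a syndetically scrambled set for $f$ with $e\in S$, let $x\in\mathrm{Tran}(f)$, and put $T=S*x=\{a*x:a\in S\}$. Then: (i) $T$ is homeomorphic to $S$ and $T$ is syndetically scrambled for $f$; moreover, if $d$ is a two-sided invariant compatible metric on $X$ and $S$ is syndetically $\varepsilon$-scrambled with respect to $d$, then so is $T$; (ii) $T\subset\mathrm{Tran}(f)$, and for every $y\in T$ the orbit closure $\overline{\{f^n(y):n\ge0\}}$ contains infinitely many distinct minimal sets; (iii) $\mathrm{SProx}(f)(y)\cap\mathcal M(f)=\emptyset$ for every $y\in T$.
   Context: $X$ is a compact metric space, $f$ continuous. $\mathrm{Tran}(f)$ is the set of points with dense forward orbit; $f$ is transitive if for all nonempty open $U,V$ there is $n\in\mathbb N$ with $f^n(U)\cap V\ne\emptyset$. A minimal set is a nonempty closed $f$-invariant set with no proper nonempty closed invariant subset; $\mathcal M(f)$ is the set of points belonging to some minimal set. A metric $d$ is two-sided invariant if $d(a,b)=d(a*z,b*z)=d(z*a,z*b)$. Syndetic: a subset of $\mathbb N$ meeting every set containing arbitrarily long runs of consecutive integers. $\mathrm{Asy}(f)=\{(x,y):\lim_n d(f^n x,f^n y)=0\}$; $\mathrm{SProx}(f)=\{(x,y): \{n: d(f^nx,f^ny)<\varepsilon\}$ syndetic for all $\varepsilon>0\}$, and $\mathrm{SProx}(f)(y)=\{z:(y,z)\in\mathrm{SProx}(f)\}$.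 A set with at least two points is syndetically scrambled if all pairs of distinct points lie in $\mathrm{SProx}(f)\setminus\mathrm{Asy}(f)$; syndetically $\varepsilon$-scrambled if moreover $\limsup_n d(f^nx,f^ny)\ge\varepsilon$ for all distinct $x,y$ in it. *)

From Stdlib Require Import Reals List.
Open Scope R_scope.

Section Defs.
Context {X : Type}.

Definition is_metric (d : X -> X -> R) : Prop :=
  (forall x y, 0 <= d x y) /\
  (forall x y, d x y = 0 <-> x = y) /\
  (forall x y, d x y = d y x) /\
  (forall x y z, d x z <= d x y + d y z).

Definition is_open (d : X -> X -> R) (U : X -> Prop) : Prop :=
  forall x, U x -> exists r, 0 < r /\ forall y, d x y < r -> U y.

Definition is_closed (d : X -> X -> R) (A : X -> Prop) : Prop :=
  is_open d (fun x => ~ A x).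

Definition compact_space (d : X -> X -> R) : Prop :=
  forall (I : Type) (U : I -> X -> Prop),
    (forall i, is_open d (U i)) ->
    (forall x, exists i, U i x) ->
    exists l : list I, forall x, exists i, In i l /\ U i x.

Definition compatible_metric (d d' : X -> X -> R) : Prop :=
  is_metric d' /\ forall U, is_open d U <-> is_open d' U.

Definition continuous (d : X -> X -> R) (f : X -> X) : Prop :=
  forall x eps, 0 < eps ->
    exists delta, 0 < delta /\ forall y, d x y < delta -> d (f x) (f y) < eps.

Definition continuous2 (d : X -> X -> R) (m : X -> X -> X) : Prop :=
  forall x y eps, 0 < eps ->
    exists delta, 0 < delta /\ forall x' y', d x x' < delta -> d y y' < delta ->
      d (m x y) (m x' y') < eps.

Definition continuous_on (d : X -> X -> R) (A : X -> Prop) (h : X -> X) : Prop :=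
  forall x eps, A x -> 0 < eps ->
    exists delta, 0 < delta /\ forall y, A y -> d x y < delta -> d (h x) (h y) < eps.

Definition homeomorphic (d : X -> X -> R) (A B : X -> Prop) : Prop :=
  exists h g : X -> X,
    (forall a, A a -> B (h a)) /\ (forall b, B b -> A (g b)) /\
    (forall a, A a -> g (h a) = a) /\ (forall b, B b -> h (g b) = b) /\
    continuous_on d A h /\ continuous_on d B g.

Definition infinite_type : Prop := ~ exists l : list X, forall x, In x l.

Definition is_group (mul : X -> X -> X) (inv : X -> X) (e : X) : Prop :=
  (forall a b c, mul a (mul b c) = mul (mul a b) c) /\
  (forall a, mul e a = a /\ mul a e = a) /\
  (forall a, mul (inv a) a = e /\ mul a (inv a) = e).

Definition group_hom (mul : X -> X -> X) (f : X -> X) : Prop :=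
  forall a b, f (mul a b) = mul (f a) (f b).

Definition two_sided_invariant (mul : X -> X -> X) (d : X -> X -> R) : Prop :=
  forall a b z, d a b = d (mul a z) (mul b z) /\ d a b = d (mul z a) (mul z b).

Definition iter (f : X -> X) (n : nat) (x : X) : X := Nat.iter n f x.

Definition dense (d : X -> X -> R) (A : X -> Prop) : Prop :=
  forall x eps, 0 < eps -> exists y, A y /\ d x y < eps.

Definition orbit_closure (d : X -> X -> R) (f : X -> X) (y : X) : X -> Prop :=
  fun z => forall eps, 0 < eps -> exists n : nat, d (iter f n y) z < eps.

Definition Tran (d : X -> X -> R) (f : X -> X) : X -> Prop :=
  fun x => dense d (fun z => exists n : nat, z = iter f n x).

Definition transitive (d : X -> X -> R) (f : X -> X) : Prop :=
  forall U V, is_open d U -> is_open d V -> (exists u, U u) -> (exists v, V v) ->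
    exists n : nat, (1 <= n)%nat /\ exists u, U u /\ V (iter f n u).

Definition invariant (f : X -> X) (M : X -> Prop) : Prop :=
  forall x, M x -> M (f x).

Definition minimal_set (d : X -> X -> R) (f : X -> X) (M : X -> Prop) : Prop :=
  (exists x, M x) /\ is_closed d M /\ invariant f M /\
  forall N : X -> Prop, (exists x, N x) -> is_closed d N -> invariant f N ->
    (forall x, N x -> M x) -> forall x, M x -> N x.

Definition MinPts (d : X -> X -> R) (f : X -> X) : X -> Prop :=
  fun x => exists M, minimal_set d f M /\ M x.

Definition thick (B : nat -> Prop) : Prop :=
  forall L : nat, exists m : nat, forall i : nat, (i < L)%nat -> B (m + i)%nat.

Definition syndetic (A : nat -> Prop) : Prop :=
  forall B, thick B -> exists n, A n /\ B n.

Definition Asy (d : X -> X -> R) (f : X -> X) (x y : X) : Prop :=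
  forall eps, 0 < eps -> exists N : nat, forall n : nat, (N <= n)%nat ->
    d (iter f n x) (iter f n y) < eps.

Definition SProx (d : X -> X -> R) (f : X -> X) (x y : X) : Prop :=
  forall eps, 0 < eps -> syndetic (fun n => d (iter f n x) (iter f n y) < eps).

Definition synd_scrambled (d : X -> X -> R) (f : X -> X) (S : X -> Prop) : Prop :=
  (exists a b, S a /\ S b /\ a <> b) /\
  forall a b, S a -> S b -> a <> b -> SProx d f a b /\ ~ Asy d f a b.

Definition limsup_ge (d : X -> X -> R) (f : X -> X) (eps : R) (x y : X) : Prop :=
  forall delta, 0 < delta -> forall N : nat, exists n : nat, (N <= n)%nat /\
    eps - delta < d (iter f n x) (iter f n y).

Definition synd_eps_scrambled (d : X -> X -> R) (f : X -> X) (eps : R)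
    (S : X -> Prop) : Prop :=
  synd_scrambled d f S /\
  forall a b, S a -> S b -> a <> b -> limsup_ge d f eps a b.

End Defs.

From Stdlib Require Import Reals List Lra Lia Classical ClassicalEpsilon.
Open Scope R_scope.

(* 1. Since f^n(a*w) = f^n(a)*f^n(w), and right translations are
      equicontinuous on the compact group, z |-> z*w preserves syndetically
      proximal and asymptotic pairs; with w = x and w = x^-1 this transfers
      scrambledness from S to T, and S, T are homeomorphic (part (i)).
   2. Separation criterion: if a point p of the orbit closure of y has its
      orbit at distance >= r from an invariant set containing z, then (y, z)
      is not syndetically proximal.  Applied to the fixed point e, it shows
      that if (a, e) is syndetically proximal then e lies in the orbit closure
      of every point of the orbit closure of a.
   3. With 2 and compactness, the orbit closure of the pair (a, x) contains
      (e, m) for every minimal point m; as minimal points are dense, a*x is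
      transitive (part (ii), first half).
   4. A minimal set containing e is {e}, and a closed invariant set containing
      a transitive point is X; so finitely many minimal sets never cover the
      dense set M(f), giving infinitely many minimal sets (part (ii)), and with
      2 also part (iii). *)

Lemma inv_succ_pos (k : nat) : 0 < / INR (S k).
Proof. apply Rinv_0_lt_compat, lt_0_INR; lia. Qed.

Lemma inv_succ_small (eps : R) :
  0 < eps -> exists K : nat, forall k, (K <= k)%nat -> / INR (S k) < eps.
Proof.
  intros He. destruct (archimed_cor1 eps He) as [N [HN HN0]].
  exists N. intros k Hk. apply Rle_lt_trans with (/ INR N); auto.
  apply Rinv_le_contravar; [apply lt_0_INR; lia | apply le_INR; lia].
Qed.

Section FreshSequence.
Variables (A : Type) (pick : list A -> A).

Fixpoint picked (k : nat) : list A :=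
  match k with
  | O => nil
  | S k => pick (picked k) :: picked k
  end.

Lemma picked_earlier i j : (i < j)%nat -> In (pick (picked i)) (picked j).
Proof.
  induction j as [|j IH]; intros Hij; [lia|]. simpl.
  destruct (Nat.eq_dec i j) as [->|Hne]; [left; reflexivity | right; apply IH; lia].
Qed.
End FreshSequence.

Lemma fresh_sequence {A : Type} (P : A -> Prop) (Rel : A -> A -> Prop) :
  (forall L : list A, exists a, P a /\ forall b, In b L -> ~ Rel a b) ->
  exists s : nat -> A, (forall k, P (s k)) /\ forall i j, (i < j)%nat -> ~ Rel (s j) (s i).
Proof.
  intros Hfresh. destruct (choice _ Hfresh) as [pick Hpick].
  exists (fun k => pick (picked A pick k)). split.
  - intros k. apply Hpick.
  - intros i j Hij. apply Hpick, picked_earlier, Hij.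
Qed.

Section Metric.
Context {X : Type} (d : X -> X -> R) (Hd : is_metric d).

Lemma d_sym a b : d a b = d b a.
Proof. destruct Hd as (_ & _ & H & _). apply H. Qed.

Lemma d_tri a b c : d a c <= d a b + d b c.
Proof. destruct Hd as (_ & _ & _ & H). apply H. Qed.

Lemma d_refl a : d a a = 0.
Proof. destruct Hd as (_ & H & _). apply H; reflexivity. Qed.

Lemma d_pos_neq a b : a <> b -> 0 < d a b.
Proof.
  intros Hab. destruct Hd as (Hpos & Hzero & _).
  destruct (Rle_lt_or_eq_dec 0 (d a b) (Hpos a b)) as [H|H]; auto.
  exfalso. apply Hab, Hzero. auto.
Qed.

Lemma closed_adherent (A : X -> Prop) q :
  is_closed d A -> (forall eps, 0 < eps -> exists w, A w /\ d q w < eps) -> A q.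
Proof.
  intros HA H. apply NNPP. intros Hq.
  destruct (HA q Hq) as [r [Hr Hr']]. destruct (H r Hr) as [w [Aw Hw]].
  exact (Hr' w Hw Aw).
Qed.

Lemma closed_away (A : X -> Prop) q :
  is_closed d A -> ~ A q -> exists r, 0 < r /\ forall w, A w -> r <= d q w.
Proof.
  intros HA Hq. destruct (HA q Hq) as [r [Hr Hr']]. exists r. split; auto.
  intros w Aw. destruct (Rle_or_lt r (d q w)) as [H|H]; auto.
  exfalso. exact (Hr' w H Aw).
Qed.

Lemma closed_singleton q : is_closed d (fun w => w = q).
Proof.
  intros z Hz. exists (d z q). split; [apply d_pos_neq; auto|].
  intros y Hy ->. lra.
Qed.

Lemma closed_list_union {I : Type} (F : I -> X -> Prop) (L : list I) :
  (forall i, In i L -> is_closed d (F i)) -> is_closed d (fun z => exists i, In i L /\ F i z).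
Proof.
  induction L as [|i L IH]; intros HF z Hz.
  - exists 1. split; [lra|]. intros y _ [j [[] _]].
  - assert (Hi : ~ F i z) by (intros Fz; apply Hz; exists i; simpl; auto).
    assert (HL : ~ exists j, In j L /\ F j z)
      by (intros [j [Hj Fz]]; apply Hz; exists j; simpl; auto).
    destruct (HF i (or_introl eq_refl) z Hi) as [r1 [Hr1 Hr1']].
    destruct (IH (fun j Hj => HF j (or_intror Hj)) z HL) as [r2 [Hr2 Hr2']].
    exists (Rmin r1 r2). split; [apply Rmin_pos; auto|].
    intros y Hy [j [[<-|Hj] Fy]].
    + apply (Hr1' y); auto. eapply Rlt_le_trans; [apply Hy | apply Rmin_l].
    + apply (Hr2' y); [eapply Rlt_le_trans; [apply Hy | apply Rmin_r] | eauto].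
Qed.

Lemma closed_dense_full (A : X -> Prop) : is_closed d A -> dense d A -> forall z, A z.
Proof. intros HA Hden z. apply (closed_adherent A z HA). intros eps He. apply Hden, He. Qed.
End Metric.
Definition cluster_point {X : Type} (d : X -> X -> R) (s : nat -> X) (p : X) : Prop :=
  forall eps, 0 < eps -> forall N, exists k, (N <= k)%nat /\ d p (s k) < eps.

Section Compact.
Context {X : Type} (d : X -> X -> R) (Hd : is_metric d) (Hc : compact_space d).

(* Sequential compactness: every sequence has a cluster point.  Otherwise the
   balls that eventually miss the sequence form an open cover with no finite
   subcover. *)
Lemma cluster_exists (s : nat -> X) : exists p, cluster_point d s p.
Proof.
  apply NNPP. intros Hn.
  assert (Hfar : forall p, exists eps, 0 < eps /\
            exists N, forall k, (N <= k)%nat -> ~ d p (s k) < eps).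
  { intros p. apply NNPP. intros Hp. apply Hn. exists p. intros eps He N.
    apply NNPP. intros Hk. apply Hp. exists eps. split; auto. exists N.
    intros k Hk1 Hk2. apply Hk. exists k; auto. }
  set (I := {pr : X * R * nat | let '(p, eps, N) := pr in
              0 < eps /\ forall k, (N <= k)%nat -> ~ d p (s k) < eps}).
  set (U := fun (i : I) (y : X) => let '(p, eps, N) := proj1_sig i in d p y < eps).
  destruct (Hc I U) as [l Hl].
  - intros [[[p eps] N] [He HN]]. unfold U; simpl. intros y Hy.
    exists (eps - d p y). split; [lra|]. intros z Hz.
    pose proof (d_tri d Hd p y z). lra.
  - intros y. destruct (Hfar y) as [eps [He [N HN]]].
    exists (exist _ (y, eps, N) (conj He HN)). unfold U; simpl. rewrite d_refl; auto.
  - set (Nmax := fold_right (fun (i : I) m => Nat.max (snd (proj1_sig i)) m) 0%nat l).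
    assert (HM : forall i, In i l -> (snd (proj1_sig i) <= Nmax)%nat).
    { unfold Nmax; clear. induction l as [|a l IH]; simpl; intros i Hi; [contradiction|].
      destruct Hi as [<-|Hi]; [lia | specialize (IH i Hi); lia]. }
    destruct (Hl (s Nmax)) as [i [Hi Ui]]. specialize (HM i Hi).
    destruct i as [[[p eps] N] [He HN]]. unfold U in Ui; simpl in *.
    exact (HN Nmax HM Ui).
Qed.

(* A pair of sequences has a joint cluster point: take a cluster point of t
   along a subsequence of s converging to a cluster point of s. *)
Lemma cluster_exists2 (s t : nat -> X) :
  exists p q, forall eps, 0 < eps -> forall N,
    exists k, (N <= k)%nat /\ d p (s k) < eps /\ d q (t k) < eps.
Proof.
  destruct (cluster_exists s) as [p Hp].
  assert (Hsub : forall k, exists j, (k <= j)%nat /\ d p (s j) < / INR (S k))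
    by (intros k; apply Hp, inv_succ_pos).
  destruct (choice _ Hsub) as [phi Hphi].
  destruct (cluster_exists (fun k => t (phi k))) as [q Hq].
  exists p, q. intros eps He N.
  destruct (inv_succ_small eps He) as [K HK].
  destruct (Hq eps He (Nat.max N K)) as [k [Hk1 Hk2]].
  destruct (Hphi k) as [Hphi1 Hphi2].
  exists (phi k). split; [lia|]. split; auto.
  apply Rlt_trans with (/ INR (S k)); auto. apply HK. lia.
Qed.

(* The right translations z |-> z*w are equicontinuous: a continuous binary
   operation on a compact space is uniformly continuous. *)
Lemma right_translations_equicontinuous (mul : X -> X -> X) :
  continuous2 d mul ->
  forall eps, 0 < eps -> exists delta, 0 < delta /\
    forall u v w, d u v < delta -> d (mul u w) (mul v w) < eps.
Proof.
  intros Hm eps He. apply NNPP. intros H.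
  assert (Hbad : forall k : nat, exists t : X * X * X, let '(u, v, w) := t in
             d u v < / INR (S k) /\ ~ d (mul u w) (mul v w) < eps).
  { intros k. apply NNPP. intros H1. apply H. exists (/ INR (S k)).
    split; [apply inv_succ_pos|]. intros u v w Huv. apply NNPP. intros H2.
    apply H1. exists (u, v, w). auto. }
  destruct (choice _ Hbad) as [t Ht].
  destruct (cluster_exists2 (fun k => fst (fst (t k))) (fun k => snd (t k))) as [p [q Hpq]].
  destruct (Hm p q (eps / 2) ltac:(lra)) as [r [Hr Hr']].
  destruct (inv_succ_small (r / 2) ltac:(lra)) as [K HK].
  destruct (Hpq (r / 2) ltac:(lra) K) as [k [Hk [H1 H2]]].
  specialize (Ht k). specialize (HK k Hk).
  destruct (t k) as [[u v] w]. cbn [fst snd] in *. destruct Ht as [Huv Hne]. apply Hne.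
  pose proof (d_tri d Hd p u v).
  pose proof (Hr' u w ltac:(lra) ltac:(lra)) as Hu.
  pose proof (Hr' v w ltac:(lra) ltac:(lra)) as Hv.
  pose proof (d_tri d Hd (mul u w) (mul p q) (mul v w)).
  rewrite (d_sym d Hd (mul u w) (mul p q)) in *. lra.
Qed.
End Compact.

Lemma iter_S {X : Type} (f : X -> X) n x : iter f (S n) x = f (iter f n x).
Proof. reflexivity. Qed.

Lemma iter_add {X : Type} (f : X -> X) i n x : iter f i (iter f n x) = iter f (i + n) x.
Proof. unfold iter. rewrite Nat.iter_add. reflexivity. Qed.

Lemma iter_invariant {X : Type} (f : X -> X) (A : X -> Prop) :
  invariant f A -> forall n z, A z -> A (iter f n z).
Proof. intros HA n z Hz. induction n; simpl; auto. Qed.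

Lemma iter_fixed {X : Type} (f : X -> X) q : f q = q -> forall n, iter f n q = q.
Proof. intros Hq n. induction n as [|n IH]; auto. rewrite iter_S, IH. exact Hq. Qed.
Section Orbits.
Context {X : Type} (d : X -> X -> R) (Hd : is_metric d) (f : X -> X) (Hf : continuous d f).

Lemma iter_continuous i : continuous d (iter f i).
Proof.
  induction i as [|i IH]; intros p eps He; [exists eps; split; auto|].
  destruct (Hf (iter f i p) eps He) as [r [Hr Hr']].
  destruct (IH p r Hr) as [r2 [Hr2 Hr2']].
  exists r2. split; auto. intros y Hy. rewrite !iter_S. apply Hr', Hr2', Hy.
Qed.

Lemma orbit_segment_continuous L p eps :
  0 < eps -> exists rho, 0 < rho /\ forall y, d p y < rho ->
    forall i, (i < L)%nat -> d (iter f i p) (iter f i y) < eps.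
Proof.
  intros He. induction L as [|L IH]; [exists 1; split; [lra | intros; lia]|].
  destruct IH as [r [Hr Hr']].
  destruct (iter_continuous L p eps He) as [r2 [Hr2 Hr2']].
  exists (Rmin r r2). split; [apply Rmin_pos; auto|].
  intros y Hy i Hi. destruct (Nat.eq_dec i L) as [->|Hne].
  - apply Hr2'. eapply Rlt_le_trans; [apply Hy | apply Rmin_r].
  - apply Hr'; [eapply Rlt_le_trans; [apply Hy | apply Rmin_l] | lia].
Qed.

Lemma oc_closed y : is_closed d (orbit_closure d f y).
Proof.
  intros z Hz. apply not_all_ex_not in Hz. destruct Hz as [eps Hz].
  apply imply_to_and in Hz. destruct Hz as [He Hz].
  exists (eps / 2). split; [lra|]. intros w Hw Hoc.
  apply Hz. destruct (Hoc (eps / 2) ltac:(lra)) as [n Hn]. exists n.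
  pose proof (d_tri d Hd (iter f n y) w z). rewrite (d_sym d Hd w z) in *. lra.
Qed.

Lemma oc_orbit y n : orbit_closure d f y (iter f n y).
Proof. intros eps He. exists n. rewrite d_refl; auto. Qed.

Lemma oc_self y : orbit_closure d f y y.
Proof. exact (oc_orbit y 0). Qed.

Lemma oc_invariant y : invariant f (orbit_closure d f y).
Proof.
  intros z Hz eps He. destruct (Hf z eps He) as [r [Hr Hr']].
  destruct (Hz r Hr) as [n Hn]. exists (S n).
  rewrite iter_S, d_sym; auto. apply Hr'. rewrite d_sym; auto.
Qed.

Lemma oc_least (A : X -> Prop) y :
  is_closed d A -> invariant f A -> A y -> forall z, orbit_closure d f y z -> A z.
Proof.
  intros HA Hi Hy z Hz. apply (closed_adherent d A z HA). intros eps He.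
  destruct (Hz eps He) as [n Hn]. exists (iter f n y).
  split; [apply iter_invariant; auto | rewrite d_sym; auto].
Qed.

Lemma tran_oc_full y : Tran d f y -> forall z, orbit_closure d f y z.
Proof.
  intros Hy z eps He. destruct (Hy z eps He) as [w [[n ->] Hw]].
  exists n. rewrite d_sym; auto.
Qed.

Lemma tran_closed_invariant_full (A : X -> Prop) y :
  Tran d f y -> is_closed d A -> invariant f A -> A y -> forall z, A z.
Proof. intros Hy HA Hi Ay z. apply (oc_least A y HA Hi Ay), tran_oc_full, Hy. Qed.

Lemma minimal_oc M q : minimal_set d f M -> M q -> forall w, M w -> orbit_closure d f q w.
Proof.
  intros [_ [HMc [HMi HMmin]]] Hq w Hw.
  apply (HMmin (orbit_closure d f q)); auto.
  - exists q. apply oc_self.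
  - apply oc_closed.
  - apply oc_invariant.
  - apply (oc_least M q HMc HMi Hq).
Qed.

Lemma minimal_at_fixed_point M q :
  f q = q -> minimal_set d f M -> M q -> forall w, M w -> w = q.
Proof.
  intros Hq [_ [_ [_ HMmin]]] Mq w Mw. apply (HMmin (fun w => w = q)); auto.
  - exists q; reflexivity.
  - apply closed_singleton, Hd.
  - intros c ->. exact Hq.
  - intros c ->. exact Mq.
Qed.

(* Indeed the orbit of y shadows that of
   p on arbitrarily long blocks, where it stays r/2-far from the orbit of z,
   so the times at which y and z are r/2-close miss a thick set. *)
Lemma not_sprox_separated y z p (C : X -> Prop) r :
  orbit_closure d f y p -> invariant f C -> C z -> 0 < r ->
  (forall i c, C c -> r <= d (iter f i p) c) -> ~ SProx d f y z.
Proof.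
  intros Hp HC Cz Hr Hsep Hs.
  assert (Hthick : thick (fun n => ~ d (iter f n y) (iter f n z) < r / 2)).
  { intros L. destruct (orbit_segment_continuous L p (r / 2) ltac:(lra)) as [rho [Hrho Hrho']].
    destruct (Hp rho Hrho) as [n Hn]. exists n. intros i Hi Hlt.
    specialize (Hrho' (iter f n y) ltac:(rewrite d_sym; auto) i Hi).
    rewrite iter_add, Nat.add_comm in Hrho'.
    specialize (Hsep i (iter f (n + i) z) (iter_invariant f C HC _ z Cz)).
    pose proof (d_tri d Hd (iter f i p) (iter f (n + i) y) (iter f (n + i) z)). lra. }
  destruct (Hs (r / 2) ltac:(lra) _ Hthick) as [n [Hn1 Hn2]]. exact (Hn2 Hn1).
Qed.

Lemma not_sprox_fixed_point y q (A : X -> Prop) p :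
  f q = q -> is_closed d A -> invariant f A -> ~ A q -> A p -> orbit_closure d f y p ->
  ~ SProx d f y q.
Proof.
  intros Hq HAc HAi HAq Ap Hp.
  destruct (closed_away d A q HAc HAq) as [r [Hr Hr']].
  apply (not_sprox_separated y q p (fun c => c = q) r); auto.
  - intros c ->. exact Hq.
  - intros i c ->. rewrite d_sym; auto. apply Hr', iter_invariant; auto.
Qed.

Lemma not_sprox_to_set y q (A : X -> Prop) z :
  f q = q -> is_closed d A -> invariant f A -> ~ A q -> A z -> orbit_closure d f y q ->
  ~ SProx d f y z.
Proof.
  intros Hq HAc HAi HAq Az Hy.
  destruct (closed_away d A q HAc HAq) as [r [Hr Hr']].
  apply (not_sprox_separated y z q A r); auto.
  intros i c Ac. rewrite iter_fixed; auto.
Qed.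

Lemma sprox_fixed_recurrent y q p :
  f q = q -> SProx d f y q -> orbit_closure d f y p -> orbit_closure d f p q.
Proof.
  intros Hq Hs Hp. apply NNPP. intros Hpq.
  apply (not_sprox_fixed_point y q (orbit_closure d f p) p); auto.
  - apply oc_closed.
  - apply oc_invariant.
  - apply oc_self.
Qed.
End Orbits.
Section Groups.
Context {X : Type} (mul : X -> X -> X) (inv : X -> X) (e : X) (Hgrp : is_group mul inv e).

Lemma g_assoc a b c : mul a (mul b c) = mul (mul a b) c.
Proof. destruct Hgrp as (H & _). apply H. Qed.

Lemma g_unit_l a : mul e a = a.
Proof. destruct Hgrp as (_ & H & _). apply H. Qed.

Lemma g_unit_r a : mul a e = a.
Proof. destruct Hgrp as (_ & H & _). apply H. Qed.

Lemma g_inv_r a : mul a (inv a) = e.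
Proof. destruct Hgrp as (_ & _ & H). apply H. Qed.

Lemma g_mulK u w : mul (mul u w) (inv w) = u.
Proof. rewrite <- g_assoc, g_inv_r, g_unit_r. reflexivity. Qed.

Lemma g_rcancel a b w : mul a w = mul b w -> a = b.
Proof. intros H. rewrite <- (g_mulK a w), <- (g_mulK b w), H. reflexivity. Qed.

Lemma hom_unit f : group_hom mul f -> f e = e.
Proof.
  intros Hf. pose proof (Hf e e) as H. rewrite g_unit_l in H.
  rewrite <- (g_unit_l (f e)) in H at 1. symmetry. exact (g_rcancel _ _ _ H).
Qed.
End Groups.

Lemma iter_hom {X : Type} (mul : X -> X -> X) f :
  group_hom mul f -> forall n u v, iter f n (mul u v) = mul (iter f n u) (iter f n v).
Proof. intros Hf n u v. induction n; auto. rewrite !iter_S, IHn. apply Hf. Qed.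

Definition rtranslate {X : Type} (mul : X -> X -> X) (S : X -> Prop) (w : X) : X -> Prop :=
  fun z => exists a, S a /\ z = mul a w.

Section Translation.
Context {X : Type} (d : X -> X -> R) (Hd : is_metric d) (Hc : compact_space d)
  (mul : X -> X -> X) (inv : X -> X) (e : X) (Hgrp : is_group mul inv e)
  (Hmul : continuous2 d mul) (f : X -> X) (Hfhom : group_hom mul f).

(* Since f^n (a*w) = f^n a * f^n w, equicontinuity of right translations
   carries syndetic proximality and asymptoticity from (a, b) to (a*w, b*w). *)
Lemma sprox_mulr a b w : SProx d f a b -> SProx d f (mul a w) (mul b w).
Proof.
  intros Hs eps He.
  destruct (right_translations_equicontinuous d Hd Hc mul Hmul eps He) as [r [Hr Hr']].
  intros B HB. destruct (Hs r Hr B HB) as [n [Hn HBn]]. exists n. split; auto.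
  rewrite !(iter_hom mul f Hfhom). apply Hr', Hn.
Qed.

Lemma asy_mulr a b w : Asy d f a b -> Asy d f (mul a w) (mul b w).
Proof.
  intros Has eps He.
  destruct (right_translations_equicontinuous d Hd Hc mul Hmul eps He) as [r [Hr Hr']].
  destruct (Has r Hr) as [N HN]. exists N. intros n Hn.
  rewrite !(iter_hom mul f Hfhom). apply Hr', HN, Hn.
Qed.

Lemma mulr_continuous_on (A : X -> Prop) w : continuous_on d A (fun a => mul a w).
Proof.
  intros z eps _ He. destruct (Hmul z w eps He) as [r [Hr Hr']].
  exists r. split; auto. intros y _ Hy. apply Hr'; auto. rewrite d_refl; auto.
Qed.

Lemma rtranslate_homeomorphic (S : X -> Prop) w : homeomorphic d S (rtranslate mul S w).
Proof.
  exists (fun a => mul a w), (fun b => mul b (inv w)).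
  split; [|split; [|split; [|split; [|split]]]].
  - intros a Sa. exists a; auto.
  - intros b [a [Sa ->]]. rewrite (g_mulK mul inv e Hgrp). exact Sa.
  - intros a _. apply (g_mulK mul inv e Hgrp).
  - intros b [a [Sa ->]]. rewrite (g_mulK mul inv e Hgrp). reflexivity.
  - apply mulr_continuous_on.
  - apply mulr_continuous_on.
Qed.

Lemma rtranslate_pair (S : X -> Prop) w a' b' :
  rtranslate mul S w a' -> rtranslate mul S w b' -> a' <> b' ->
  exists a b, S a /\ S b /\ a <> b /\ a' = mul a w /\ b' = mul b w.
Proof.
  intros [a [Sa ->]] [b [Sb ->]] Hne. exists a, b.
  repeat split; auto. intros ->. auto.
Qed.

Lemma rtranslate_two_points (S : X -> Prop) w :
  (exists a b, S a /\ S b /\ a <> b) ->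
  exists a' b', rtranslate mul S w a' /\ rtranslate mul S w b' /\ a' <> b'.
Proof.
  intros [a [b [Sa [Sb Hab]]]]. exists (mul a w), (mul b w).
  split; [exists a; auto|]. split; [exists b; auto|].
  intros E. exact (Hab (g_rcancel mul inv e Hgrp _ _ _ E)).
Qed.

(* Right translates of syndetically scrambled sets are syndetically scrambled;
   non-asymptoticity is transported back by the translation by w^-1. *)
Lemma rtranslate_synd_scrambled (S : X -> Prop) w :
  synd_scrambled d f S -> synd_scrambled d f (rtranslate mul S w).
Proof.
  intros [Htwo HS]. split; [apply rtranslate_two_points, Htwo|].
  intros a' b' Ta' Tb' Hne.
  destruct (rtranslate_pair S w a' b' Ta' Tb' Hne) as [a [b [Sa [Sb [Hab [-> ->]]]]]].
  destruct (HS a b Sa Sb Hab) as [Hsp Hna]. split.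
  - apply sprox_mulr, Hsp.
  - intros Has. apply Hna.
    rewrite <- (g_mulK mul inv e Hgrp a w), <- (g_mulK mul inv e Hgrp b w).
    apply asy_mulr, Has.
Qed.
End Translation.

(* For a two-sided invariant metric, right translation does not change the
   distances along orbits, so all scrambling data of S pass to S*w exactly. *)
Section InvariantMetric.
Context {X : Type} (d' : X -> X -> R) (mul : X -> X -> X) (inv : X -> X) (e : X)
  (Hgrp : is_group mul inv e) (f : X -> X) (Hfhom : group_hom mul f)
  (Hinvd : two_sided_invariant mul d').

Lemma orbit_dist_mulr a b w n :
  d' (iter f n (mul a w)) (iter f n (mul b w)) = d' (iter f n a) (iter f n b).
Proof. rewrite !(iter_hom mul f Hfhom). symmetry. apply Hinvd. Qed.

Lemma rtranslate_synd_eps_scrambled (S : X -> Prop) w eps :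
  synd_eps_scrambled d' f eps S -> synd_eps_scrambled d' f eps (rtranslate mul S w).
Proof.
  intros [[Htwo HS] Hls]. split; [split|].
  - apply (rtranslate_two_points mul inv e Hgrp), Htwo.
  - intros a' b' Ta' Tb' Hne.
    destruct (rtranslate_pair mul S w a' b' Ta' Tb' Hne) as [a [b [Sa [Sb [Hab [-> ->]]]]]].
    destruct (HS a b Sa Sb Hab) as [Hsp Hna]. split.
    + intros r Hr B HB. destruct (Hsp r Hr B HB) as [n [Hn HBn]].
      exists n. rewrite orbit_dist_mulr. auto.
    + intros Has. apply Hna. intros r Hr. destruct (Has r Hr) as [N HN].
      exists N. intros n Hn. rewrite <- (orbit_dist_mulr a b w). auto.
  - intros a' b' Ta' Tb' Hne.
    destruct (rtranslate_pair mul S w a' b' Ta' Tb' Hne) as [a [b [Sa [Sb [Hab [-> ->]]]]]].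
    intros delta Hdel N. destruct (Hls a b Sa Sb Hab delta Hdel N) as [n [Hn1 Hn2]].
    exists n. rewrite orbit_dist_mulr. auto.
Qed.
End InvariantMetric.
Section TranslateTransitive.
Context {X : Type} (d : X -> X -> R) (Hd : is_metric d) (Hc : compact_space d)
  (mul : X -> X -> X) (inv : X -> X) (e : X) (Hgrp : is_group mul inv e)
  (Hmul : continuous2 d mul) (f : X -> X) (Hf : continuous d f) (Hfhom : group_hom mul f)
  (Hdense : dense d (MinPts d f)) (a x : X) (Ha : SProx d f a e) (Hx : Tran d f x).

Definition joint_oc (p q : X) : Prop :=
  forall eps, 0 < eps -> exists n, d (iter f n a) p < eps /\ d (iter f n x) q < eps.

Lemma joint_oc_iter p q : joint_oc p q -> forall i, joint_oc (iter f i p) (iter f i q).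
Proof.
  intros H i eps He.
  destruct (iter_continuous d f Hf i p eps He) as [r1 [Hr1 Hr1']].
  destruct (iter_continuous d f Hf i q eps He) as [r2 [Hr2 Hr2']].
  destruct (H (Rmin r1 r2) (Rmin_pos _ _ Hr1 Hr2)) as [n [Hn1 Hn2]].
  exists (i + n)%nat. rewrite <- !iter_add, !(d_sym d Hd (iter f i (iter f n _))).
  split; [apply Hr1' | apply Hr2']; rewrite d_sym; auto.
  - eapply Rlt_le_trans; [apply Hn1 | apply Rmin_l].
  - eapply Rlt_le_trans; [apply Hn2 | apply Rmin_r].
Qed.

Lemma joint_oc_adherent p q :
  (forall eps, 0 < eps -> exists p' q', joint_oc p' q' /\ d p p' < eps /\ d q q' < eps) ->
  joint_oc p q.
Proof.
  intros H eps He. destruct (H (eps / 2) ltac:(lra)) as [p' [q' [HK [H1 H2]]]].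
  destruct (HK (eps / 2) ltac:(lra)) as [n [H3 H4]]. exists n.
  pose proof (d_tri d Hd (iter f n a) p' p). pose proof (d_tri d Hd (iter f n x) q' q).
  rewrite (d_sym d Hd p' p), (d_sym d Hd q' q) in *. lra.
Qed.

(* Every m is the second coordinate of a point of the joint orbit closure:
   follow the times at which the orbit of x approaches m. *)
Lemma joint_oc_snd_full m : exists u, joint_oc u m.
Proof.
  assert (Happrox : forall k, exists n, d m (iter f n x) < / INR (S k)).
  { intros k. destruct (Hx m _ (inv_succ_pos k)) as [w [[n ->] Hw]]. eauto. }
  destruct (choice _ Happrox) as [nk Hnk].
  destruct (cluster_exists d Hd Hc (fun k => iter f (nk k) a)) as [u Hu].
  exists u. intros eps He. destruct (inv_succ_small eps He) as [K HK].
  destruct (Hu eps He K) as [k [Hk Hk']]. exists (nk k).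
  rewrite !(d_sym d Hd (iter f (nk k) _)). split; auto.
  apply Rlt_trans with (/ INR (S k)); auto.
Qed.

(* Over a point m of a minimal set M, the joint orbit closure also contains a
   point (e, q0) with q0 in M: the orbit of u returns close to e because
   (a, e) is syndetically proximal. *)
Lemma joint_oc_unit_fiber u m M :
  joint_oc u m -> minimal_set d f M -> M m -> exists q0, M q0 /\ joint_oc e q0.
Proof.
  intros Hum [_ [HMc [HMi _]]] Mm.
  assert (Hue : orbit_closure d f u e).
  { apply (sprox_fixed_recurrent d Hd f Hf a e u (hom_unit mul inv e Hgrp f Hfhom) Ha).
    intros eps He. destruct (Hum eps He) as [n [Hn _]]. eauto. }
  assert (Hret : forall k, exists i, d (iter f i u) e < / INR (S k))
    by (intros k; apply Hue, inv_succ_pos).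
  destruct (choice _ Hret) as [ik Hik].
  destruct (cluster_exists d Hd Hc (fun k => iter f (ik k) m)) as [q0 Hq0].
  exists q0. split.
  - apply (closed_adherent d M q0 HMc). intros eps He.
    destruct (Hq0 eps He 0%nat) as [k [_ Hk]].
    exists (iter f (ik k) m). split; auto. apply iter_invariant; auto.
  - apply joint_oc_adherent. intros eps He.
    destruct (inv_succ_small eps He) as [K HK]. destruct (Hq0 eps He K) as [k [Hk Hk']].
    exists (iter f (ik k) u), (iter f (ik k) m). split; [apply joint_oc_iter, Hum|].
    split; auto. rewrite d_sym; auto. apply Rlt_trans with (/ INR (S k)); auto.
Qed.

(* Hence (e, m) lies in the joint orbit closure for every minimal point m,
   since m is in the orbit closure of q0 and e is fixed. *)
Lemma joint_oc_minimal m : MinPts d f m -> joint_oc e m.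
Proof.
  intros [M [HM Mm]].
  destruct (joint_oc_snd_full m) as [u Hu].
  destruct (joint_oc_unit_fiber u m M Hu HM Mm) as [q0 [Mq0 Hq0]].
  pose proof (minimal_oc d Hd f Hf M q0 HM Mq0 m Mm) as Hm.
  apply joint_oc_adherent. intros eps He. destruct (Hm eps He) as [j Hj].
  exists e, (iter f j q0). split.
  - rewrite <- (iter_fixed f e (hom_unit mul inv e Hgrp f Hfhom) j) at 1.
    apply joint_oc_iter, Hq0.
  - rewrite d_refl, d_sym; auto.
Qed.

(* a*x is transitive: its orbit comes close to e*m = m for every minimal
   point m, and minimal points are dense. *)
Lemma translate_transitive : Tran d f (mul a x).
Proof.
  intros z eps He.
  destruct (Hdense z (eps / 2) ltac:(lra)) as [m [Hm Hzm]].
  destruct (Hmul e m (eps / 2) ltac:(lra)) as [r [Hr Hr']].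
  destruct (joint_oc_minimal m Hm r Hr) as [n [H1 H2]].
  exists (iter f n (mul a x)). split; [eauto|].
  rewrite (iter_hom mul f Hfhom).
  specialize (Hr' (iter f n a) (iter f n x) ltac:(rewrite d_sym; auto) ltac:(rewrite d_sym; auto)).
  rewrite (g_unit_l mul inv e Hgrp) in Hr'.
  pose proof (d_tri d Hd z m (mul (iter f n a) (iter f n x))). lra.
Qed.
End TranslateTransitive.
Section MinimalSets.
Context {X : Type} (d : X -> X -> R) (Hd : is_metric d)
  (mul : X -> X -> X) (inv : X -> X) (e : X) (Hgrp : is_group mul inv e)
  (f : X -> X) (Hf : continuous d f) (Hfhom : group_hom mul f)
  (Hdense : dense d (MinPts d f)) (Hinf : @infinite_type X).

Definition same_set (M N : X -> Prop) : Prop := forall z, M z <-> N z.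

Lemma minimal_set_same M N : same_set M N -> minimal_set d f M -> minimal_set d f N.
Proof.
  intros E [[w Mw] [HMc [HMi HMmin]]]. split; [|split; [|split]].
  - exists w. apply E, Mw.
  - intros y Hy. destruct (HMc y (fun My => Hy (proj1 (E y) My))) as [r [Hr Hr']].
    exists r. split; auto. intros y' Hy' Ny'. apply (Hr' y' Hy'), E, Ny'.
  - intros y Ny. apply E, HMi, E, Ny.
  - intros K HK HKc HKi HKN y Ny.
    apply (HMmin K HK HKc HKi (fun z Kz => proj2 (E z) (HKN z Kz))), E, Ny.
Qed.

(* Otherwise the union of the
   listed minimal sets is closed and contains the dense set M(f), so it is X;
   the one containing a transitive point x is then X, yet it contains the
   fixed point e and so equals {e}, contradicting that X is infinite. *)
Lemma exists_new_minimal_set (x : X) (Hx : Tran d f x) (L : list (X -> Prop)) :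
  exists M, minimal_set d f M /\ forall N, In N L -> ~ same_set M N.
Proof.
  apply NNPP. intros Hnone.
  assert (Hlisted : forall M, minimal_set d f M -> exists N, In N L /\ same_set M N).
  { intros M HM. apply NNPP. intros H1. apply Hnone. exists M. split; auto.
    intros N HN E. apply H1. eauto. }
  assert (Hcover : forall z, exists N, In N L /\ (minimal_set d f N /\ N z)).
  { apply (closed_dense_full d).
    - apply (closed_list_union d). intros N _ z Hz.
      destruct (classic (minimal_set d f N)) as [HN|HN].
      + destruct (proj1 (proj2 HN) z (fun Nz => Hz (conj HN Nz))) as [r [Hr Hr']].
        exists r. split; auto. intros y Hy [_ Ny]. exact (Hr' y Hy Ny).
      + exists 1. split; [lra | tauto].
    - intros z eps He. destruct (Hdense z eps He) as [w [[M [HM Mw]] Hw]].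
      exists w. split; auto. destruct (Hlisted M HM) as [N [HN E]].
      exists N. split; auto. split; [apply (minimal_set_same M N E HM) | apply E, Mw]. }
  destruct (Hcover x) as [N [_ [HN Nx]]].
  assert (Hall : forall z, N z).
  { destruct HN as [_ [HNc [HNi _]]]. apply (tran_closed_invariant_full d Hd f N x); auto. }
  apply Hinf. exists (e :: nil). intros z. left. symmetry.
  exact (minimal_at_fixed_point d Hd f N e (hom_unit mul inv e Hgrp f Hfhom) HN (Hall e) z (Hall z)).
Qed.

Lemma minimal_sets_sequence (x : X) (Hx : Tran d f x) :
  exists Ms : nat -> X -> Prop,
    (forall k, minimal_set d f (Ms k)) /\ (forall i j, i <> j -> ~ same_set (Ms i) (Ms j)).
Proof.
  destruct (fresh_sequence (minimal_set d f) same_set (exists_new_minimal_set x Hx))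
    as [Ms [HMs Hfresh]].
  exists Ms. split; auto. intros i j Hij E.
  destruct (Nat.lt_gt_cases i j) as [[Hlt|Hgt] _]; auto.
  - apply (Hfresh i j Hlt). intros z. symmetry. apply E.
  - exact (Hfresh j i Hgt E).
Qed.

(* If e is not in the minimal set M of z, the orbit of y approaches
   the fixed point e, which is separated from M.  If e is in M, then z = e,
   and y approaches another minimal set, which is separated from e. *)
Lemma tran_not_sprox_minimal y : Tran d f y -> forall z, SProx d f y z -> ~ MinPts d f z.
Proof.
  intros Hy z Hs [M [HM Mz]].
  pose proof (hom_unit mul inv e Hgrp f Hfhom) as He.
  destruct (classic (M e)) as [Me|Me].
  - rewrite (minimal_at_fixed_point d Hd f M e He HM Me z Mz) in Hs.
    destruct (exists_new_minimal_set y Hy ((fun w => w = e) :: nil)) as [M2 [HM2 HM2new]].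
    assert (NM2 : ~ M2 e).
    { intros M2e. apply (HM2new (fun w => w = e)); [left; reflexivity|].
      intros w. split; [apply (minimal_at_fixed_point d Hd f M2 e He HM2 M2e) | intros ->; auto]. }
    destruct HM2 as [[p M2p] [HM2c [HM2i _]]].
    exact (not_sprox_fixed_point d Hd f Hf y e M2 p He HM2c HM2i NM2 M2p
             (tran_oc_full d Hd f y Hy p) Hs).
  - destruct HM as [_ [HMc [HMi _]]].
    exact (not_sprox_to_set d Hd f Hf y e M z He HMc HMi Me Mz
             (tran_oc_full d Hd f y Hy e) Hs).
Qed.
End MinimalSets.

Theorem theorem4p3
  (X : Type) (d : X -> X -> R) (mul : X -> X -> X) (inv : X -> X) (e : X)
  (f : X -> X)
  (Hd : is_metric d) (Hcpt : compact_space d) (Hinf : @infinite_type X)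
  (Hgrp : is_group mul inv e) (Hmul : continuous2 d mul) (Hinv : continuous d inv)
  (Hfc : continuous d f) (Hfhom : group_hom mul f)
  (Htr : transitive d f) (Hdense : dense d (MinPts d f))
  (S : X -> Prop) (HS : synd_scrambled d f S) (HeS : S e)
  (x : X) (Hx : Tran d f x) :
  let T := fun z => exists a, S a /\ z = mul a x in
  (* (i) *)
  (homeomorphic d S T /\ synd_scrambled d f T /\
   (forall (d' : X -> X -> R) (eps : R),
      compatible_metric d d' -> two_sided_invariant mul d' ->
      synd_eps_scrambled d' f eps S -> synd_eps_scrambled d' f eps T)) /\
  (* (ii) *)
  (forall y, T y -> Tran d f y) /\
  (forall y, T y ->
     exists Ms : nat -> X -> Prop,
       (forall k, minimal_set d f (Ms k)) /\
       (forall k z, Ms k z -> orbit_closure d f y z) /\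
       (forall i j, i <> j -> ~ (forall z, Ms i z <-> Ms j z))) /\
  (* (iii) *)
  (forall y, T y -> forall z, SProx d f y z -> ~ MinPts d f z).
Proof.
  intros T.
  assert (Htran : forall y, T y -> Tran d f y).
  { intros y [a [Sa ->]]. destruct (classic (a = e)) as [->|Hae].
    - rewrite (g_unit_l mul inv e Hgrp). exact Hx.
    - apply (translate_transitive d Hd Hcpt mul inv e Hgrp Hmul f Hfc Hfhom Hdense a x); auto.
      apply (proj2 HS a e Sa HeS Hae). }
  split; [split; [|split] | split; [|split]].
  - exact (rtranslate_homeomorphic d Hd mul inv e Hgrp Hmul S x).
  - exact (rtranslate_synd_scrambled d Hd Hcpt mul inv e Hgrp Hmul f Hfhom S x HS).
  - intros d' eps _ Hinvd.
    exact (rtranslate_synd_eps_scrambled d' mul inv e Hgrp f Hfhom Hinvd S x eps).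
  - exact Htran.
  - intros y Ty.
    destruct (minimal_sets_sequence d Hd mul inv e Hgrp f Hfhom Hdense Hinf x Hx)
      as [Ms [HMs Hdistinct]].
    exists Ms. split; [|split]; auto.
    intros k z _. exact (tran_oc_full d Hd f y (Htran y Ty) z).
  - intros y Ty. exact (tran_not_sprox_minimal d Hd mul inv e Hgrp f Hfc Hfhom Hdense Hinf y (Htran y Ty)).
Qed.
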